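(* Let $\Phi(z)\in K(z)$ have degree $d\ge2$ and put $B_0=B_0(\Phi)$. Assume $\Phi(0)=0$ and $\Phi$ has no poles in $D(0,B_0)^-$, so that $\Phi(D(0,B_0)^-)=D(0,f_\Phi(B_0))^-$, where $f_\Phi(r)=\mathrm{diam}_\infty(\Phi(\zeta_{0,r}))$ (increasing for $0\le r\le B_0$). Suppose $\Phi$ has $n\ge1$ zeros in $D(0,B_0)^-$ and $m\ge0$ poles in $D(0,1)^-\setminus D(0,B_0)^-$, counted with multiplicity. Then $$f_\Phi(B_0)\le\frac{B_0^{\,n-m}}{\mathrm{GIR}(\Phi)}.$$
   Context: $K$ is a complete, algebraically closed field with a nontrivial nonarchimedean absolute value. $D(a,r)^-=\{z\in K:|z-a|<r\}$. Fix $q>1$. $\mathbf P^1_{\mathrm{Berk}}$ is the Berkovich projective line over $K$ (tree containing $\mathbf P^1(K)$); $\zeta_{a,r}$ is the point of $D(a,r)=\{|z-a|\le r\}$, $\zeta_{a,0}=a$, $\zeta_G=\zeta_{0,1}$; $[x,y]$ unique path, $(x,y]$ half-open. $\mathrm{diam}_\infty(\zeta_{a,r})=r$ for $a\in K$, $r\ge0$. $\rho$ is the logarithmic path metric on $\mathbf H^1=\mathbf P^1_{\mathrm{Berk}}\setminus\mathbf P^1(K)$; $\mathrm{diam}_G(x)=q^{-\rho(\zeta_G,x)}$, explicitly $\mathrm{diam}_G(\zeta_{a,r})=r/\max(1,|a|,r)^2$. $\mathrm{GIR}(\Phi)=\mathrm{diam}_G(\Phi(\zeta_G))$. For $a\in\mathbf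 P^1(K)$, $0<r<1$, $Q_{a,r}$ is the point of $[a,\zeta_G]$ with $\mathrm{diam}_G=r$, $\mathcal B(a,r)^-=\{x:Q_{a,r}\in(x,\zeta_G]\}$, $\mathcal B(a,1)^-=\bigcup_{r<1}\mathcal B(a,r)^-$; $B_0(\Phi)=\sup\{0<r\le1:\Phi(\mathcal B(a,r)^-)\ne\mathbf P^1_{\mathrm{Berk}}\ \forall a\in\mathbf P^1(K)\}$. *)

From HB Require Import structures.
From mathcomp Require Import all_boot all_order all_algebra.
From Stdlib Require Import Reals ClassicalEpsilon.
Set Implicit Arguments. Unset Strict Implicit. Unset Printing Implicit Defensive.
Import GRing.Theory.
Local Open Scope ring_scope.

Definition is_glb_R (E : R -> Prop) (m : R) : Prop :=
  (forall x, E x -> Rle m x) /\ (forall b, (forall x, E x -> Rle b x) -> Rle b m).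
Definition Rinf (E : R -> Prop) : R := epsilon (inhabits R0) (is_glb_R E).
Definition Rsup (E : R -> Prop) : R := epsilon (inhabits R0) (is_lub E).

Definition asbool (P : Prop) : bool :=
  if excluded_middle_informative P then true else false.

Record nonarch_abs (K : fieldType) (abs : K -> R) : Prop := {
  abs_eq0 : forall x : K, abs x = R0 <-> x = 0;
  abs_mul : forall x y : K, abs (x * y) = Rmult (abs x) (abs y);
  abs_ultra : forall x y : K, Rle (abs (x + y)) (Rmax (abs x) (abs y));
  abs_nontriv : exists x : K, abs x <> R0 /\ abs x <> R1;
  abs_complete : forall u : nat -> K,
     (forall eps, Rlt R0 eps -> exists N : nat, forall p q : nat,
         leq N p -> leq N q -> Rlt (abs (u p - u q)) eps) ->
     exists l : K, forall eps, Rlt R0 eps -> exists N : nat, forall p : nat,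
         leq N p -> Rlt (abs (u p - l)) eps }.

Section Berkovich.
Variables (K : closedFieldType) (abs : K -> R).

(* Points of the Berkovich affine line: multiplicative seminorms on K[T]
   extending abs.  P^1_Berk = option of these, None standing for infinity. *)
Definition is_berk_seminorm (s : {poly K} -> R) : Prop :=
  (forall c : K, s c%:P = abs c) /\
  (forall f g, s (f * g) = Rmult (s f) (s g)) /\
  (forall f g, Rle (s (f + g)) (Rplus (s f) (s g))).

Definition berk := option ({poly K} -> R).

Definition is_berk (x : berk) : Prop :=
  match x with None => True | Some s => is_berk_seminorm s end.

(* zeta_{a,r} : sup norm on D(a,r) = max_i |c_i| r^i, c_i Taylor coeffs at a *)
Definition zeta_sn (a : K) (r : R) (f : {poly K}) : R :=
  let g := f \Po ('X + a%:P) in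
  foldr (fun i acc => Rmax (Rmult (abs g`_i) (pow r i)) acc) R0
        (iota 0 (size g)).
Definition zeta (a : K) (r : R) : berk := Some (zeta_sn a r).
Definition zetaG : berk := zeta 0 R1.
Definition classical (a : option K) : berk :=
  match a with None => None | Some a => zeta a R0 end.

Definition berk_le (x y : berk) : Prop :=
  match y with
  | None => True
  | Some t => match x with None => False | Some s => forall f, Rle (s f) (t f) end
  end.

Definition in_seg (x y z : berk) : Prop :=
  (berk_le x z \/ berk_le y z) /\
  forall w, is_berk w -> berk_le x w -> berk_le y w -> berk_le z w.

Definition diam_inf (x : berk) : R :=
  match x with
  | None => R0   (* not used: infinity has no finite diameter *)
  | Some s => Rinf (fun v => exists a : K, v = s ('X - a%:P))
  end.
Definition diam_G (x : berk) : R :=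
  match x with
  | None => R0
  | Some s => Rdiv (diam_inf x) (Rsqr (Rmax R1 (s 'X)))
  end.

(* B(a,r)^- = { x : Q_{a,r} in (x, zeta_G] } with Q_{a,r} the point of
   [a, zeta_G] of diam_G equal to r; B(a,1)^- is the union over r<1. *)
Definition open_ball_lt1 (a : option K) (r : R) (x : berk) : Prop :=
  exists Qp, is_berk Qp /\ in_seg (classical a) zetaG Qp /\ diam_G Qp = r /\
             in_seg x zetaG Qp /\ Qp <> x.
Definition open_ball (a : option K) (r : R) (x : berk) : Prop :=
  (Rlt r R1 /\ open_ball_lt1 a r x) \/
  (r = R1 /\ exists r', Rlt R0 r' /\ Rlt r' R1 /\ open_ball_lt1 a r' x).

(* Action of Phi = P/Q (P, Q coprime) on P^1_Berk. *)
Definition homog (P Q g : {poly K}) : {poly K} :=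
  \sum_(i < size g) g`_i *: (P ^+ i * Q ^+ ((size g).-1 - i)).

Definition push (P Q : {poly K}) (x : berk) : berk :=
  match x with
  | None =>
      if leq (size Q).+1 (size P) then None
      else if size P == size Q then classical (Some (lead_coef P / lead_coef Q))
      else classical (Some 0)
  | Some s =>
      if asbool (s Q = R0) then None
      else Some (fun g => Rdiv (s (homog P Q g)) (pow (s Q) (size g).-1))
  end.

Definition B0 (P Q : {poly K}) : R :=
  Rsup (fun r => Rlt R0 r /\ Rle r R1 /\
        forall a : option K,
          ~ (forall y, is_berk y ->
               exists x, is_berk x /\ open_ball a r x /\ push P Q x = y)).

Definition fPhi (P Q : {poly K}) (r : R) : R := diam_inf (push P Q (zeta 0 r)).
Definition GIR (P Q : {poly K}) : R := diam_G (push P Q zetaG).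

Definition nroots_in (p : {poly K}) (S : K -> Prop) (n : nat) : Prop :=
  exists (c : K) (rs : seq K),
    p = c *: \prod_(r <- rs) ('X - r%:P) /\ n = count (fun r => asbool (S r)) rs.

End Berkovich.

From HB Require Import structures.
From mathcomp Require Import all_boot all_order all_algebra.
From Stdlib Require Import Reals ClassicalEpsilon Lra FunctionalExtensionality PropExtensionality.
Import GRing.Theory.
Set Implicit Arguments. Unset Strict Implicit. Unset Printing Implicit Defensive.

(* On a circle |z| = r the Gauss norm |f|_r = max_i |f_i| r^i of a polynomial
   is multiplicative, with |X - b|_r = max(|b|, r).  Factoring P and Q into
   linear factors, every zero of P in D(0,B)^- turns a factor max(|z|,1) of
   |P|_1 into B, so |P|_B <= B^n |P|_1; every pole with B <= |z| < 1 turns a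
   factor 1 of |Q|_1 into |z| >= B, so |Q|_B >= B^m |Q|_1.  Since
   f_Phi(B) = inf_a |P - aQ|_B / |Q|_B <= |P|_B / |Q|_B, this gives
   f_Phi(B) <= B^(n-m) M with M = |P|_1 / |Q|_1.  On the other hand
   GIR(Phi) = D / max(1,M)^2 with D = inf_a |P - aQ|_1 / |Q|_1 <= M, and
   D > 0: as P and Q are coprime and d >= 2, some 2x2 minor of their
   coefficient vectors is nonzero, and it bounds |P - aQ|_1 from below
   uniformly in a.  Hence M <= max(1,M)^2 / D = 1 / GIR(Phi). *)

Section RealFacts.
Local Open Scope R_scope.

Lemma Rinf_ext (E1 E2 : R -> Prop) : (forall v, E1 v <-> E2 v) -> Rinf E1 = Rinf E2.
Proof.
by move=> h; f_equal; apply: functional_extensionality => v; apply: propositional_extensionality.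
Qed.

Lemma Rinf_glb (E : R -> Prop) :
  (exists x, E x) -> (exists m, forall x, E x -> m <= x) -> is_glb_R E (Rinf E).
Proof.
move=> [x Ex] [m Hm]; apply: epsilon_spec.
have hb : bound (fun y => E (- y)) by exists (- m) => y /Hm; lra.
have hne : exists y, E (- y) by exists (- x); rewrite Ropp_involutive.
have [l [Hl1 Hl2]] := completeness _ hb hne.
exists (- l); split=> [y Ey|b Hb].
  have : - y <= l by apply: Hl1; rewrite Ropp_involutive.
  lra.
have : l <= - b by apply: Hl2 => y /Hb; lra.
lra.
Qed.

Lemma Rle_sqr_max1_div (M D : R) : 0 < D -> D <= M -> M <= Rsqr (Rmax 1 M) / D.
Proof.
move=> hD hDM; have h1 := Rmax_l 1 M; have h2 := Rmax_r 1 M.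
apply: (Rmult_le_reg_r D) => //; rewrite /Rdiv Rmult_assoc Rinv_l /Rsqr; nra.
Qed.

Lemma Rmult_lt_of_scaled (a b c r p : R) :
  0 <= a -> 0 < p -> b <= r -> a * (r * p) < c * p -> a * b < c.
Proof.
move=> ha hp hbr h; have hap := Rmult_le_pos a p ha (Rlt_le _ _ hp).
by apply: (Rmult_lt_reg_r p) => //; nra.
Qed.

Lemma Rmult_gt_of_scaled (a b c r p : R) :
  0 <= a -> 0 < p -> r <= b -> c * p < a * (r * p) -> c < a * b.
Proof.
move=> ha hp hrb h; have hap := Rmult_le_pos a p ha (Rlt_le _ _ hp).
by apply: (Rmult_lt_reg_r p) => //; nra.
Qed.

Lemma powerRZ_sub_nat (B : R) (n m : nat) : B <> 0 ->
  powerRZ B (Z.of_nat n - Z.of_nat m) = B ^ n / B ^ m.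
Proof. by move=> hB; rewrite /Z.sub powerRZ_add // powerRZ_neg' -!pow_powerRZ. Qed.

Lemma Rle_div_GIR_bound (f pB qB p1 q1 B D : R) (n m : nat) :
  0 < B -> 0 <= p1 -> 0 < q1 -> 0 < D -> D <= p1 / q1 ->
  f <= pB / qB -> pB <= B ^ n * p1 -> B ^ m * q1 <= qB ->
  f <= powerRZ B (Z.of_nat n - Z.of_nat m) / (D / Rsqr (Rmax 1 (p1 / q1))).
Proof.
move=> hB hp1 hq1 hD hDM hf hpB hqB.
have hBn := pow_lt B n hB; have hBm := pow_lt B m hB.
have hM := Rle_sqr_max1_div hD hDM.
have hsq : 0 < Rsqr (Rmax 1 (p1 / q1)).
  by apply: Rlt_0_sqr; have := Rmax_l 1 (p1 / q1); lra.
rewrite powerRZ_sub_nat; last lra.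
have -> : B ^ n / B ^ m / (D / Rsqr (Rmax 1 (p1 / q1)))
        = B ^ n / B ^ m * (Rsqr (Rmax 1 (p1 / q1)) / D) by field; lra.
apply: Rle_trans hf _.
have hqB0 : 0 < qB by have := Rmult_lt_0_compat _ _ hBm hq1; lra.
apply: Rle_trans (_ : pB / qB <= B ^ n / B ^ m * (p1 / q1)) _.
  apply: (Rmult_le_reg_r qB) => //.
  have -> : pB / qB * qB = pB by field; lra.
  apply: Rle_trans hpB _.
  have -> : B ^ n / B ^ m * (p1 / q1) * qB = B ^ n * p1 * (qB / (B ^ m * q1)) by field; lra.
  rewrite -{1}(Rmult_1_r (B ^ n * p1)); apply: Rmult_le_compat_l; first nra.
  apply: (Rmult_le_reg_r (B ^ m * q1)); first nra.
  by rewrite Rmult_1_l /Rdiv Rmult_assoc Rinv_l ?Rmult_1_r //; nra.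
apply: Rmult_le_compat_l => //.
by apply: Rmult_le_pos; [lra|apply: Rlt_le; apply: Rinv_0_lt_compat].
Qed.

End RealFacts.

Local Open Scope ring_scope.

Lemma asboolT (P : Prop) : P -> asbool P = true.
Proof. by rewrite /asbool; case: excluded_middle_informative. Qed.

Lemma asboolF (P : Prop) : ~ P -> asbool P = false.
Proof. by rewrite /asbool; case: excluded_middle_informative. Qed.

Lemma asboolP (P : Prop) : asbool P = true -> P.
Proof. by rewrite /asbool; case: excluded_middle_informative. Qed.

Section RmaxFold.
Variable t : nat -> R.

Definition Rmax_fold (l : seq nat) : R := foldr (fun i acc => Rmax (t i) acc) R0 l.

Lemma Rmax_fold_ge0 l : Rle R0 (Rmax_fold l).
Proof. by elim: l => [|a l IH] /=; [apply: Rle_refl|apply: Rle_trans IH (Rmax_r _ _)]. Qed.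

Lemma Rmax_fold_ub l i : i \in l -> Rle (t i) (Rmax_fold l).
Proof.
elim: l => [|a l IH] //=; rewrite in_cons => /orP [/eqP->|/IH hi].
  exact: Rmax_l.
exact: Rle_trans hi (Rmax_r _ _).
Qed.

Lemma Rmax_fold_attained l : Rmax_fold l = R0 \/ exists i, Rmax_fold l = t i.
Proof.
elim: l => [|a l IH] /=; first by left.
case: (Rle_dec (t a) (Rmax_fold l)) => h.
  by rewrite Rmax_right.
by right; exists a; rewrite Rmax_left //; apply: Rlt_le; apply: Rnot_le_lt.
Qed.

End RmaxFold.

Section GaussNorm.
Variables (K : closedFieldType) (abs : K -> R) (habs : nonarch_abs abs).

Lemma abs0 : abs 0 = R0.
Proof. exact/(abs_eq0 habs). Qed.

Lemma abs_ge0 x : Rle R0 (abs x).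
Proof.
(* x is the square of a root of X^2 - x *)
have [s] := @solve_monicpoly K 2 (nth 0 [:: x]) isT.
rewrite !big_ord_recl big_ord0 /= mulr1 mul0r !addr0 => hs.
rewrite -hs expr2 (abs_mul habs); nra.
Qed.

Lemma abs_gt0 x : x != 0 -> Rlt R0 (abs x).
Proof.
move=> hx; case: (abs_ge0 x) => // /esym /(abs_eq0 habs) /eqP.
by rewrite (negbTE hx).
Qed.

Lemma abs1 : abs 1 = R1.
Proof.
have h : abs 1 = Rmult (abs 1) (abs 1) by rewrite -(abs_mul habs) mulr1.
have h1 : Rlt R0 (abs 1) := abs_gt0 (oner_neq0 K).
by apply: (Rmult_eq_reg_l (abs 1)); [rewrite Rmult_1_r -h|lra].
Qed.

Lemma absN x : abs (- x) = abs x.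
Proof.
have hN1 : abs (-1) = R1.
  have h : Rmult (abs (-1)) (abs (-1)) = R1 by rewrite -(abs_mul habs) mulrNN mulr1 abs1.
  have := abs_ge0 (-1); nra.
by rewrite -mulN1r (abs_mul habs) hN1 Rmult_1_l.
Qed.

Lemma abs_add_eq_l x y : Rlt (abs y) (abs x) -> abs (x + y) = abs x.
Proof.
move=> h; have h1 := abs_ultra habs x y.
have h2 := abs_ultra habs (x + y) (- y); rewrite addrK absN in h2.
rewrite Rmax_left in h1; last lra.
apply: Rle_antisym => //; move: h2.
case: (Rle_dec (abs (x + y)) (abs y)) => c; first by rewrite Rmax_right //; lra.
by rewrite Rmax_left //; apply: Rlt_le; apply: Rnot_le_lt.
Qed.

Lemma abs_sub_eq_l x y : Rlt (abs y) (abs x) -> abs (x - y) = abs x.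
Proof. by move=> h; apply: abs_add_eq_l; rewrite absN. Qed.

Lemma abs_sub_eq_r x y : Rlt (abs x) (abs y) -> abs (x - y) = abs y.
Proof. by move=> h; rewrite -absN opprB abs_sub_eq_l. Qed.

Definition gauss_term (r : R) (f : {poly K}) (i : nat) : R := Rmult (abs f`_i) (pow r i).
Definition gauss_norm (r : R) (f : {poly K}) : R := zeta_sn abs 0 r f.

Lemma gauss_normE r f : gauss_norm r f = Rmax_fold (gauss_term r f) (iota 0 (size f)).
Proof. by rewrite /gauss_norm /zeta_sn polyC0 addr0 comp_polyXr. Qed.

Lemma gauss_norm_ge0 r f : Rle R0 (gauss_norm r f).
Proof. by rewrite gauss_normE; apply: Rmax_fold_ge0. Qed.

Lemma gauss_term_le_norm r f i : Rle (gauss_term r f i) (gauss_norm r f).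
Proof.
case: (ltnP i (size f)) => hi.
  by rewrite gauss_normE; apply: Rmax_fold_ub; rewrite mem_iota add0n.
by rewrite /gauss_term nth_default // abs0 Rmult_0_l; apply: gauss_norm_ge0.
Qed.

Lemma gauss_norm_attained r f :
  gauss_norm r f = R0 \/ exists i, gauss_norm r f = gauss_term r f i.
Proof. by rewrite gauss_normE; apply: Rmax_fold_attained. Qed.

Lemma gauss_norm_unique r f X : (forall i, Rle (gauss_term r f i) X) ->
  (X = R0 \/ exists i, X = gauss_term r f i) -> X = gauss_norm r f.
Proof.
move=> hub hX; apply: Rle_antisym.
  by case: hX => [->|[i ->]]; [apply: gauss_norm_ge0|apply: gauss_term_le_norm].
case: (gauss_norm_attained r f) => [->|[i ->]] //.
apply: Rle_trans (hub 0%nat); rewrite /gauss_term Rmult_1_r; exact: abs_ge0.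
Qed.

Lemma gauss_normZ r c f : gauss_norm r (c *: f) = Rmult (abs c) (gauss_norm r f).
Proof.
have termZ i : gauss_term r (c *: f) i = Rmult (abs c) (gauss_term r f i).
  by rewrite /gauss_term coefZ (abs_mul habs) Rmult_assoc.
symmetry; apply: gauss_norm_unique => [i|].
  rewrite termZ; apply: Rmult_le_compat_l; [exact: abs_ge0|exact: gauss_term_le_norm].
case: (gauss_norm_attained r f) => [->|[i ->]]; first by left; rewrite Rmult_0_r.
by right; exists i; rewrite termZ.
Qed.

Lemma gauss_norm1 r : gauss_norm r 1 = R1.
Proof.
symmetry; apply: gauss_norm_unique => [[|i]|]; last first.
  by right; exists 0%nat; rewrite /gauss_term coef1 /= abs1 Rmult_1_r.
all: rewrite /gauss_term coef1 /= ?abs1 ?abs0 ?Rmult_1_r ?Rmult_0_l.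
- exact: Rle_0_1.
- exact: Rle_refl.
Qed.

Lemma gauss_norm_gt0 r f : Rlt R0 r -> f != 0 -> Rlt R0 (gauss_norm r f).
Proof.
move=> hr hf; apply: Rlt_le_trans (gauss_term_le_norm r f (size f).-1).
apply: Rmult_lt_0_compat; last exact: pow_lt.
by apply: abs_gt0; rewrite -lead_coefE lead_coef_eq0.
Qed.

Lemma coef_mulXsubC (f : {poly K}) b i :
  (f * ('X - b%:P))`_i = (if i == 0%nat then 0 else f`_i.-1) - f`_i * b.
Proof. by rewrite mulrBr coefB coefMX coefMC. Qed.

Lemma gauss_term_mulXsubC_le r f b i : Rle R0 r ->
  Rle (gauss_term r (f * ('X - b%:P)) i) (Rmult (gauss_norm r f) (Rmax (abs b) r)).
Proof.
move=> hr; rewrite /gauss_term coef_mulXsubC.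
have hM := gauss_norm_ge0 r f.
have hb := abs_ge0 b; have hbmx := Rmax_l (abs b) r; have hrmx := Rmax_r (abs b) r.
case: i => [|k] /=.
  rewrite sub0r absN (abs_mul habs) Rmult_1_r.
  have := gauss_term_le_norm r f 0; rewrite /gauss_term /= Rmult_1_r.
  have := abs_ge0 f`_0; nra.
have hk := gauss_term_le_norm r f k; have hk1 := gauss_term_le_norm r f k.+1.
rewrite /gauss_term /= in hk hk1.
have hu := abs_ultra habs f`_k (- (f`_k.+1 * b)); rewrite absN (abs_mul habs) in hu.
have hp : Rle R0 (Rmult r (pow r k)) by apply: Rmult_le_pos => //; apply: pow_le.
apply: Rle_trans (Rmult_le_compat_r _ _ _ hp hu) _.
rewrite Rmult_comm -RmaxRmult //; apply: Rmax_lub.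
  apply: Rle_trans (Rmult_le_compat_l _ _ _ hM hrmx).
  apply: (Rle_trans _ (Rmult (Rmult (abs f`_k) (pow r k)) r)); first by right; ring.
  exact: Rmult_le_compat_r.
apply: Rle_trans (Rmult_le_compat_l _ _ _ hM hbmx).
apply: (Rle_trans _ (Rmult (Rmult (abs f`_k.+1) (Rmult r (pow r k))) (abs b))).
  by right; ring.
exact: Rmult_le_compat_r.
Qed.

Lemma gauss_term_mulXsubC_last r f b j : Rlt R0 r -> Rle (abs b) r ->
  Rlt (gauss_term r f j.+1) (gauss_term r f j) ->
  gauss_term r (f * ('X - b%:P)) j.+1 = Rmult (gauss_term r f j) r.
Proof.
rewrite /gauss_term /= => hr hbr hlt.
have hsmall : Rlt (abs (f`_j.+1 * b)) (abs f`_j).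
  rewrite (abs_mul habs); apply: (Rmult_lt_of_scaled _ (pow_lt r j hr) hbr hlt).
  exact: abs_ge0.
by rewrite coef_mulXsubC /= abs_sub_eq_l //; ring.
Qed.

Lemma gauss_term_mulXsubC_first r f b j : Rlt R0 r -> Rlt r (abs b) ->
  (forall k, j = k.+1 -> Rlt (gauss_term r f k) (gauss_term r f j)) ->
  gauss_term r (f * ('X - b%:P)) j = Rmult (gauss_term r f j) (abs b).
Proof.
rewrite /gauss_term coef_mulXsubC => hr hbr.
case: j => [|k] /= hprev.
  by rewrite sub0r absN (abs_mul habs); ring.
have := hprev k erefl; rewrite /= => hlt.
have hbig : Rlt (abs f`_k) (abs (f`_k.+1 * b)).
  rewrite (abs_mul habs); apply: (Rmult_gt_of_scaled _ (pow_lt r k hr) (Rlt_le _ _ hbr) hlt).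
  exact: abs_ge0.
by rewrite abs_sub_eq_r // (abs_mul habs); ring.
Qed.

Lemma gauss_norm_mulXsubC r f b : Rlt R0 r ->
  gauss_norm r (f * ('X - b%:P)) = Rmult (gauss_norm r f) (Rmax (abs b) r).
Proof.
move=> hr; symmetry; apply: gauss_norm_unique.
  by move=> i; apply: gauss_term_mulXsubC_le; apply: Rlt_le.
have [M0|M0] := Req_dec_T (gauss_norm r f) R0; first by left; rewrite M0 Rmult_0_l.
right; pose maximal j := asbool (gauss_term r f j = gauss_norm r f).
have maximalP j : maximal j = true <-> gauss_term r f j = gauss_norm r f.
  by split=> [/asboolP|/asboolT].
have ex_maximal : exists j, maximal j.
  by case: (gauss_norm_attained r f) => [//|[i hi]]; exists i; apply/maximalP.
have below j : ~~ maximal j -> Rlt (gauss_term r f j) (gauss_norm r f).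
  move=> hj; case: (gauss_term_le_norm r f j) => // /maximalP.
  by rewrite (negbTE hj).
(* For |b| <= r the norm of f (X - b) is attained just after the last index
   where that of f is, otherwise at the first one. *)
case: (Rle_dec (abs b) r) => hbr.
- have bounded j : maximal j -> leq j (size f).
    move=> /maximalP hj; rewrite leqNgt; apply/negP => /ltnW hsz; apply: M0.
    by rewrite -hj /gauss_term nth_default // abs0 Rmult_0_l.
  have [j /maximalP hj jmax] := ex_maxnP ex_maximal bounded.
  have hj1 : ~~ maximal j.+1 by apply/negP => /jmax; rewrite ltnn.
  exists j.+1; rewrite Rmax_right // gauss_term_mulXsubC_last // ?hj //.
  exact: below.
- have [j /maximalP hj jmin] := ex_minnP ex_maximal.
  have hbr' : Rlt r (abs b) by apply: Rnot_le_lt.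
  exists j; rewrite Rmax_left; last exact: Rlt_le.
  rewrite gauss_term_mulXsubC_first // ?hj // => k jk.
  by apply: below; apply/negP => /jmin; rewrite jk ltnn.
Qed.

Definition radial_prod (r : R) (rs : seq K) : R :=
  foldr (fun q acc => Rmult (Rmax (abs q) r) acc) R1 rs.

Lemma gauss_norm_factored r c rs : Rlt R0 r ->
  gauss_norm r (c *: \prod_(q <- rs) ('X - q%:P)) = Rmult (abs c) (radial_prod r rs).
Proof.
move=> hr; rewrite gauss_normZ; congr Rmult; elim: rs => [|q rs IH] /=.
  by rewrite big_nil gauss_norm1.
by rewrite big_cons mulrC gauss_norm_mulXsubC // IH Rmult_comm.
Qed.

Lemma radial_prod_ge0 r rs : Rle R0 r -> Rle R0 (radial_prod r rs).
Proof.
move=> hr; elim: rs => [|q rs IH] /=; first exact: Rle_0_1.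
by apply: Rmult_le_pos => //; apply: Rle_trans hr (Rmax_r _ _).
Qed.

Lemma radial_prod_le_small_roots B rs : Rlt R0 B ->
  Rle (radial_prod B rs)
      (Rmult (pow B (count (fun q => asbool (Rlt (abs q) B)) rs)) (radial_prod R1 rs)).
Proof.
move=> hB; elim: rs => [|q rs IH] /=; first lra.
move: IH; set pc := pow B _; set P1 := radial_prod B rs; set P2 := radial_prod R1 rs => IH.
have hP1 : Rle R0 P1 := radial_prod_ge0 rs (Rlt_le _ _ hB).
have hpcP2 : Rle R0 (Rmult pc P2).
  by apply: Rmult_le_pos; [apply: pow_le; lra|apply: radial_prod_ge0; lra].
have := Rmax_l (abs q) R1; have := Rmax_r (abs q) R1; have := abs_ge0 q.
case: (Rlt_dec (abs q) B) => hqB.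
  rewrite (asboolT hqB) (Rmax_right _ _ (Rlt_le _ _ hqB)) /= add0n -/pc.
  have := Rmult_le_pos _ _ (Rlt_le _ _ hB) hpcP2; nra.
by rewrite (asboolF hqB) (Rmax_left _ _ (Rnot_lt_le _ _ hqB)) /= add0n -/pc; nra.
Qed.

Lemma radial_prod_ge_annulus_roots B rs : Rlt R0 B -> (forall q, q \in rs -> Rle B (abs q)) ->
  Rle (Rmult (pow B (count (fun q => asbool (Rle B (abs q) /\ Rlt (abs q) R1)) rs))
             (radial_prod R1 rs))
      (radial_prod B rs).
Proof.
move=> hB; elim: rs => [|q rs IH] hin /=; first lra.
have hqB : Rle B (abs q) by apply: hin; rewrite in_cons eqxx.
have {IH} : _ := IH (fun x hx => hin x (mem_behead (hx : x \in behead (q :: rs)))).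
set pc := pow B _; set P1 := radial_prod B rs; set P2 := radial_prod R1 rs => IH.
have hpcP2 : Rle R0 (Rmult pc P2).
  by apply: Rmult_le_pos; [apply: pow_le; lra|apply: radial_prod_ge0; lra].
rewrite (Rmax_left _ _ hqB).
case: (Rlt_dec (abs q) R1) => hq1.
  rewrite (asboolT (conj hqB hq1)) (Rmax_right _ _ (Rlt_le _ _ hq1)) /= add0n -/pc.
  have := Rmult_le_pos _ _ (Rlt_le _ _ hB) hpcP2; nra.
have hF : ~ (Rle B (abs q) /\ Rlt (abs q) R1) by case.
rewrite (asboolF hF) (Rmax_left _ _ (Rnot_lt_le _ _ hq1)) /= add0n -/pc.
have := abs_ge0 q; nra.
Qed.

Lemma gauss_norm_le_small_roots B p n : Rlt R0 B ->
  nroots_in p (fun z => Rlt (abs z) B) n ->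
  Rle (gauss_norm B p) (Rmult (pow B n) (gauss_norm R1 p)).
Proof.
move=> hB [c [rs [-> ->]]]; rewrite !gauss_norm_factored //; last exact: Rlt_0_1.
apply: Rle_trans (Rmult_le_compat_l _ _ _ (abs_ge0 c) (radial_prod_le_small_roots rs hB)) _.
by right; ring.
Qed.

Lemma gauss_norm_ge_annulus_roots B p m : Rlt R0 B ->
  (forall z, Rlt (abs z) B -> p.[z] <> 0) ->
  nroots_in p (fun z => Rle B (abs z) /\ Rlt (abs z) R1) m ->
  Rle (Rmult (pow B m) (gauss_norm R1 p)) (gauss_norm B p).
Proof.
move=> hB hnz [c [rs [hp ->]]].
have hc : c != 0.
  apply/eqP => c0; apply: (hnz 0); first by rewrite abs0.
  by rewrite hp c0 scale0r horner0.
have hroots q : q \in rs -> Rle B (abs q).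
  move=> hq; apply: Rnot_lt_le => /hnz; apply; apply/rootP.
  by rewrite hp rootZ // root_prod_XsubC.
rewrite hp !gauss_norm_factored //; last exact: Rlt_0_1.
apply: Rle_trans (Rmult_le_compat_l _ _ _ (abs_ge0 c) (radial_prod_ge_annulus_roots hB hroots)).
by right; ring.
Qed.

Lemma homog_XsubC (P Q : {poly K}) a : homog P Q ('X - a%:P) = P - a *: Q.
Proof.
rewrite /homog size_XsubC !big_ord_recl big_ord0 /= !coefB !coefX !coefC /=.
by rewrite sub0r subr0 expr0 expr1 mul1r mulr1 scaleNr scale1r addr0 addrC.
Qed.

Lemma homog_X (P Q : {poly K}) : homog P Q 'X = P.
Proof. by have := homog_XsubC P Q 0; rewrite polyC0 subr0 scale0r subr0. Qed.

Lemma push_zeta (P Q : {poly K}) r : gauss_norm r Q <> R0 ->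
  push abs P Q (zeta abs 0 r) =
  Some (fun g => Rdiv (gauss_norm r (homog P Q g)) (pow (gauss_norm r Q) (size g).-1)).
Proof. by move=> h; rewrite /push /zeta (asboolF h). Qed.

Definition diam_ratios (r : R) (P Q : {poly K}) (v : R) : Prop :=
  exists a : K, v = Rdiv (gauss_norm r (P - a *: Q)) (gauss_norm r Q).

Lemma diam_push_zeta r (P Q : {poly K}) : Rlt R0 r -> Q != 0 ->
  diam_inf (push abs P Q (zeta abs 0 r)) = Rinf (diam_ratios r P Q).
Proof.
move=> hr hQ; have hQ0 := gauss_norm_gt0 hr hQ.
rewrite push_zeta; last lra.
by apply: Rinf_ext => v; split=> -[a ->]; exists a; rewrite homog_XsubC size_XsubC /= Rmult_1_r.
Qed.

Lemma GIR_eq (P Q : {poly K}) : Q != 0 ->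
  GIR abs P Q =
  Rdiv (Rinf (diam_ratios R1 P Q))
       (Rsqr (Rmax R1 (Rdiv (gauss_norm R1 P) (gauss_norm R1 Q)))).
Proof.
move=> hQ; have hQ0 := Rgt_not_eq _ _ (gauss_norm_gt0 Rlt_0_1 hQ).
rewrite /GIR /zetaG /diam_G -diam_push_zeta //; last exact: Rlt_0_1.
by rewrite push_zeta // homog_X size_polyX /= Rmult_1_r.
Qed.

Lemma Rinf_diam_ratios_glb r (P Q : {poly K}) : Rlt R0 r -> Q != 0 ->
  is_glb_R (diam_ratios r P Q) (Rinf (diam_ratios r P Q)).
Proof.
move=> hr hQ; have hQ0 := gauss_norm_gt0 hr hQ.
apply: Rinf_glb; first by exists (Rdiv (gauss_norm r (P - 0 *: Q)) (gauss_norm r Q)), 0.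
exists R0 => v [a ->]; apply: Rmult_le_pos; first exact: gauss_norm_ge0.
by apply: Rlt_le; apply: Rinv_0_lt_compat.
Qed.

Lemma Rinf_diam_ratios_le r (P Q : {poly K}) : Rlt R0 r -> Q != 0 ->
  Rle (Rinf (diam_ratios r P Q)) (Rdiv (gauss_norm r P) (gauss_norm r Q)).
Proof.
move=> hr hQ; apply: (proj1 (Rinf_diam_ratios_glb P hr hQ)).
by exists 0; rewrite scale0r subr0.
Qed.

Definition coef_minor (P Q : {poly K}) (k : nat) : K :=
  P`_k * lead_coef Q - P`_(size Q).-1 * Q`_k.

Lemma coef_minor_subZ (P Q : {poly K}) a k : coef_minor (P - a *: Q) Q k = coef_minor P Q k.
Proof.
rewrite /coef_minor !coefB !coefZ -lead_coefE !mulrBl -!mulrA (mulrC (lead_coef Q)).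
by rewrite opprB addrA subrK.
Qed.

Lemma coprimep_coef_minor_neq0 (P Q : {poly K}) : coprimep P Q -> Q != 0 ->
  leq 2 (maxn (size P).-1 (size Q).-1) -> exists k, coef_minor P Q k != 0.
Proof.
move=> hcop hQ hdeg; apply/not_all_not_ex => hminor.
have hlc : lead_coef Q != 0 by rewrite lead_coef_eq0.
(* all minors vanish: P is a scalar multiple of Q, which coprimality forces to be constant *)
have hPQ : P = (P`_(size Q).-1 / lead_coef Q) *: Q.
  apply/polyP => k; rewrite coefZ; apply: (mulIf hlc).
  have /negP/negPn := hminor k; rewrite subr_eq0 => /eqP->.
  by rewrite mulrAC divfK.
have hQ1 : size Q = 1%nat.
  have : Q %= 1 by apply: (coprimepP _ _ hcop) => //; rewrite {1}hPQ -mul_polyC dvdp_mull.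
  by move/eqp_size; rewrite size_poly1.
have hP1 : leq (size P) 1 by rewrite hPQ -hQ1; apply: size_scale_leq.
by move: hdeg; rewrite hQ1; case: (size P) hP1 => [|[|]].
Qed.

Lemma abs_coef_minor_le (P Q : {poly K}) k :
  Rle (abs (coef_minor P Q k))
      (Rmult (gauss_norm R1 P) (Rmax (abs (lead_coef Q)) (abs Q`_k))).
Proof.
have coef_le i : Rle (abs P`_i) (gauss_norm R1 P).
  by have := gauss_term_le_norm R1 P i; rewrite /gauss_term pow1 Rmult_1_r.
have hl := Rmax_l (abs (lead_coef Q)) (abs Q`_k).
have hr := Rmax_r (abs (lead_coef Q)) (abs Q`_k).
apply: Rle_trans (abs_ultra habs _ _) _; rewrite absN !(abs_mul habs).
by apply: Rmax_lub; apply: Rmult_le_compat => //; apply: abs_ge0.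
Qed.

Lemma Rinf_diam_ratios_gt0 (P Q : {poly K}) : coprimep P Q -> Q != 0 ->
  leq 2 (maxn (size P).-1 (size Q).-1) -> Rlt R0 (Rinf (diam_ratios R1 P Q)).
Proof.
move=> hcop hQ hdeg; have [k hk] := coprimep_coef_minor_neq0 hcop hQ hdeg.
have hQ1 := gauss_norm_gt0 Rlt_0_1 hQ.
set mx := Rmax (abs (lead_coef Q)) (abs Q`_k).
have hmx : Rlt R0 mx.
  by apply: Rlt_le_trans (Rmax_l _ _); apply: abs_gt0; rewrite lead_coef_eq0.
have [_ glb] := Rinf_diam_ratios_glb P Rlt_0_1 hQ.
apply: Rlt_le_trans (glb (Rdiv (Rdiv (abs (coef_minor P Q k)) mx) (gauss_norm R1 Q)) _).
  by apply: Rdiv_lt_0_compat => //; apply: Rdiv_lt_0_compat => //; apply: abs_gt0.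
move=> v [a ->]; apply: Rmult_le_compat_r; first by apply: Rlt_le; apply: Rinv_0_lt_compat.
apply: (Rmult_le_reg_r mx) => //; rewrite /Rdiv Rmult_assoc Rinv_l; last lra.
by rewrite Rmult_1_r -(coef_minor_subZ P Q a); apply: abs_coef_minor_le.
Qed.

End GaussNorm.

Theorem lemma5p5 (K : closedFieldType) (abs : K -> R) (habs : nonarch_abs abs)
  (P Q : {poly K}) (hcop : coprimep P Q) (hQ : Q != 0) (d : nat)
  (hd : d = maxn (size P).-1 (size Q).-1) (hd2 : leq 2 d)
  (hP0 : P.[0] = 0)
  (hnopole : forall z : K, Rlt (abs z) (B0 abs P Q) -> Q.[z] <> 0)
  (n m : nat) (hn : leq 1 n)
  (hzeros : nroots_in P (fun z => Rlt (abs z) (B0 abs P Q)) n)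
  (hpoles : nroots_in Q (fun z => Rle (B0 abs P Q) (abs z) /\ Rlt (abs z) R1) m) :
  Rle (fPhi abs P Q (B0 abs P Q))
      (Rdiv (powerRZ (B0 abs P Q) (Z.of_nat n - Z.of_nat m)) (GIR abs P Q)).
Proof.
move: hnopole hzeros hpoles; set B := B0 abs P Q => hnopole hzeros hpoles.
have hB : Rlt R0 B.
  have [c [zs [_ hcount]]] := hzeros.
  have : has (fun z => asbool (Rlt (abs z) B)) zs by rewrite has_count -hcount.
  by case/hasP => z _ /asboolP; apply: Rle_lt_trans (abs_ge0 habs z).
rewrite GIR_eq //.
apply: (Rle_div_GIR_bound (pB := gauss_norm abs B P) (qB := gauss_norm abs B Q)) => //.
- exact: gauss_norm_ge0.
- exact: gauss_norm_gt0 Rlt_0_1 hQ.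
- by apply: Rinf_diam_ratios_gt0 => //; rewrite -hd.
- exact: Rinf_diam_ratios_le Rlt_0_1 hQ.
- by rewrite /fPhi diam_push_zeta //; apply: Rinf_diam_ratios_le.
- exact: gauss_norm_le_small_roots.
- exact: gauss_norm_ge_annulus_roots.
Qed.
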